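(* Every W-state graph is $2$-connected.
   Context: Graphs may have parallel edges but no loops. A half-edge $2$-colouring $c$ of $G$ assigns to each pair $(e,w)$ with $w$ an endpoint of edge $e$ a colour in $\{0,1\}$ (0 = blue, 1 = red). An edge $e=uv$ is bichromatic if $c(e,u)\neq c(e,v)$ and monochromatic otherwise; standing convention: monochromatic edges are blue at both ends. A graph is matching-covered if every edge lies in some perfect matching. A W-state graph is a half-edge $2$-coloured matching-covered graph $(G,c)$ in which every perfect matching contains exactly one bichromatic edge, and every vertex $v$ is incident with an edge $e$ with $c(e,v)=1$. *)

From mathcomp Require Import all_boot.
Set Implicit Arguments. Unset Strict Implicit. Unset Printing Implicit Defensive.

(* A loopless multigraph: vertex type V, edge type E (parallel edges allowed),
   each edge e has endpoints s e and t e with s e != t e (no loops).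
   A half-edge 2-colouring is c : E -> V -> bool, where c e w is the colour of
   the half-edge (e,w) for w an endpoint of e (values at non-endpoints are
   irrelevant). false = blue (0), true = red (1). *)

Section Graph.
Variables (V E : finType) (s t : E -> V).

Definition incident (e : E) (x : V) : bool := (s e == x) || (t e == x).

Definition perfect_matching (M : {set E}) : bool :=
  [forall x : V, #|[set e in M | incident e x]| == 1].

Definition matching_covered : Prop :=
  forall e : E, exists M : {set E}, perfect_matching M /\ e \in M.

Variable c : E -> V -> bool.

Definition bichromatic (e : E) : bool := c e (s e) != c e (t e).

Definition mono_blue : Prop :=
  forall e : E, ~~ bichromatic e -> (c e (s e) = false /\ c e (t e) = false).

Definition W_state_graph : Prop :=
  [/\ (forall e, s e != t e),
      mono_blue,
      matching_covered,
      (forall M : {set E}, perfect_matching M ->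
          #|[set e in M | bichromatic e]| = 1)
    & (forall v : V, exists e : E, incident e v /\ c e v = true)].

End Graph.

Section Conn.
Variables (V E : finType) (s t : E -> V).

Definition adj (x y : V) : bool :=
  [exists e : E, ((s e == x) && (t e == y)) || ((s e == y) && (t e == x))].

Definition connected_on (S : {set V}) : Prop :=
  forall x y, x \in S -> y \in S ->
    connect [rel a b | [&& a \in S, b \in S & adj a b]] x y.

Definition two_connected : Prop :=
  [/\ 2 <= #|V|, connected_on [set: V]
    & forall x : V, connected_on [set~ x]].

End Conn.

From mathcomp Require Import all_boot.
Set Implicit Arguments. Unset Strict Implicit. Unset Printing Implicit Defensive.

(* A vertex set X with u in X and v outside is always crossed by an edge:
   otherwise gluing the part inside X of a perfect matching through a red
   half-edge at u to the part outside X of one through a red half-edge at v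
   gives a perfect matching with two bichromatic edges.
   If x were a cut vertex, let A be a component of G - x, so that every edge
   leaving A ends at x.  An edge between A and x lies in a perfect matching M1,
   and no M1-edge then leaves x + A, so |x + A| is even; an edge between x and
   the rest lies in a perfect matching M2, and no M2-edge leaves A, so |A| is
   even.  So A or x + A is crossed by no edge, which is again impossible. *)

Section Cuts.
Variables (V E : finType) (s t : E -> V).

Definition crossing (X : {set V}) (e : E) : bool := (s e \in X) != (t e \in X).

Lemma incident_uncrossed X e w :
  ~~ crossing X e -> incident s t e w -> (s e \in X) = (w \in X).
Proof. by move/negPn/eqP => hX /orP [] /eqP <-. Qed.

Lemma perfect_matching_edge_unique M e1 e2 x : perfect_matching s t M ->
  e1 \in M -> e2 \in M -> incident s t e1 x -> incident s t e2 x -> e1 = e2.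
Proof.
move=> /forallP/(_ x)/cards1P [f hf] e1M e2M i1 i2.
have : e1 \in [set e in M | incident s t e x] by rewrite inE e1M i1.
have : e2 \in [set e in M | incident s t e x] by rewrite inE e2M i2.
by rewrite hf !inE => /eqP -> /eqP ->.
Qed.

Lemma perfect_matching_splice M N X :
  perfect_matching s t M -> perfect_matching s t N ->
  (forall e, ~~ crossing X e) ->
  perfect_matching s t ([set e in M | s e \in X] :|: [set e in N | s e \notin X]).
Proof.
move=> /forallP pM /forallP pN uncrossed; apply/forallP => w.
set K := _ :|: _.
have [wX | wNX] := boolP (w \in X).
- suff -> : [set e in K | incident s t e w] = [set e in M | incident s t e w].
    exact: pM.
  apply/setP => e; rewrite !inE; case hi: (incident s t e w); rewrite ?andbF //.
  by rewrite (incident_uncrossed (uncrossed e) hi) wX /= ?andbT ?andbF ?orbF.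
- suff -> : [set e in K | incident s t e w] = [set e in N | incident s t e w].
    exact: pN.
  apply/setP => e; rewrite !inE; case hi: (incident s t e w); rewrite ?andbF //.
  by rewrite (incident_uncrossed (uncrossed e) hi) (negbTE wNX) /= ?andbT ?andbF.
Qed.

Lemma connected_on_crossing (S : {set V}) :
  (forall (A : {set V}) a b, A \subset S -> a \in A -> b \in S :\: A ->
     exists e, [&& crossing A e, s e \in S & t e \in S]) ->
  connected_on s t S.
Proof.
move=> hcross x y xS yS; apply/idPn => nxy.
pose R := [rel p q | [&& p \in S, q \in S & adj s t p q]].
pose A := [set z in S | connect R x z].
have AS : A \subset S by apply/subsetP => z; rewrite inE => /andP [].
have xA : x \in A by rewrite inE xS connect0.
have yA : y \in S :\: A by rewrite !inE yS nxy.
have A_closed p q : p \in A -> q \in S -> adj s t p q -> q \in A.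
  rewrite !inE => /andP [pS xp] qS pq; rewrite qS.
  by apply: connect_trans xp (connect1 _); rewrite /= pS qS.
have [e /and3P [ecross seS teS]] := hcross A x y AS xA yA.
move: ecross; rewrite /crossing.
have [seA | seNA] := boolP (s e \in A).
- by rewrite (A_closed (s e) (t e)) //; apply/existsP; exists e; rewrite !eqxx.
- move=> /negPn teA; move: seNA; rewrite (A_closed (t e) (s e)) //.
  by apply/existsP; exists e; rewrite !eqxx orbT.
Qed.

Section Loopless.
Hypothesis noloop : forall e, s e != t e.

Lemma sum_eq_mem (S : {set V}) (a : V) :
  \sum_(x in S) (a == x : nat) = (a \in S).
Proof.
rewrite big_mkcond (bigD1 a) //= eqxx big1 ?addn0; first by case: (a \in S).
by move=> x ax; rewrite eq_sym (negbTE ax); case: (x \in S).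
Qed.

Lemma perfect_matching_card_even M (S : {set V}) : perfect_matching s t M ->
  (forall e, e \in M -> ~~ crossing S e) -> ~~ odd #|S|.
Proof.
move=> pM uncrossed.
have -> : #|S| = \sum_(x in S) \sum_(e in M) (incident s t e x : nat).
  rewrite -sum1_card; apply: eq_bigr => x _.
  move/forallP: pM => /(_ x)/eqP <-.
  rewrite -sum1_card big_mkcond [RHS]big_mkcond /=.
  by apply: eq_bigr => e _; rewrite !inE; case: (e \in M); case: incident.
rewrite exchange_big /=; apply: (big_ind (fun n => ~~ odd n)) => //.
  by move=> m n hm hn; rewrite oddD (negbTE hm) (negbTE hn).
move=> e eM.
have -> : \sum_(x in S) (incident s t e x : nat) =
          \sum_(x in S) ((s e == x : nat) + (t e == x : nat)).
  apply: eq_bigr => x _; rewrite /incident.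
  case: (eqVneq (s e) x) => [<-|]; last by case: (t e == x).
  by rewrite eq_sym (negbTE (noloop e)).
have /negPn/eqP eS := uncrossed e eM.
by rewrite big_split /= !sum_eq_mem eS addnn odd_double.
Qed.

Lemma crossing_setU1 (A : {set V}) x e : x \notin A -> incident s t e x ->
  crossing (x |: A) e = ~~ crossing A e.
Proof.
move=> xA /orP [] /eqP ex; have := noloop e;
  rewrite /crossing !in_setU1 ex eqxx (negbTE xA) /= => nx.
- by rewrite eq_sym in nx; rewrite (negbTE nx); case: (t e \in A).
- by rewrite (negbTE nx); case: (s e \in A).
Qed.

Lemma perfect_matching_card_even_at M f x (S : {set V}) :
  perfect_matching s t M -> f \in M -> incident s t f x -> ~~ crossing S f ->
  (forall e, crossing S e -> incident s t e x) -> ~~ odd #|S|.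
Proof.
move=> pM fM fx fS crossx; apply: (perfect_matching_card_even pM) => e eM.
apply: contraNN fS => eS.
by rewrite -(perfect_matching_edge_unique pM eM fM (crossx e eS) fx).
Qed.

Lemma matching_covered_vertex_cut (A : {set V}) x :
  matching_covered s t -> x \notin A ->
  (forall e, crossing A e -> incident s t e x) ->
  (forall e, ~~ crossing A e) \/ (forall e, ~~ crossing (x |: A) e).
Proof.
move=> mc xA crossAx.
have crossA1x e : crossing (x |: A) e -> incident s t e x.
  apply: contraTT; rewrite /incident negb_or => /andP [/negbTE sx /negbTE tx].
  rewrite /crossing !in_setU1 sx tx /=; apply/negP => /crossAx.
  by rewrite /incident sx tx.
have [/forallP A_uncrossed | ] := boolP [forall e, ~~ crossing A e].
  by left.
rewrite negb_forall => /existsP [e1 /negPn e1A].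
right => e2; apply/negP => e2A1.
have [M1 [pM1 e1M1]] := mc e1; have [M2 [pM2 e2M2]] := mc e2.
have e1x := crossAx e1 e1A; have e2x := crossA1x e2 e2A1.
have : ~~ odd #|x |: A|.
  by apply: (perfect_matching_card_even_at pM1 e1M1 e1x _ crossA1x);
    rewrite crossing_setU1 // e1A.
rewrite cardsU1 xA /= negbK; apply/negP.
apply: (perfect_matching_card_even_at pM2 e2M2 e2x _ crossAx).
by rewrite -(crossing_setU1 xA e2x) e2A1.
Qed.

End Loopless.
End Cuts.

Section WState.
Variables (V E : finType) (s t : E -> V) (c : E -> V -> bool).
Hypothesis W : W_state_graph s t c.

Lemma W_state_red_bichromatic e v :
  incident s t e v -> c e v = true -> bichromatic s t c e.
Proof.
case: W => _ mb _ _ _ ev cev; apply: contraT => /(mb e) [cs ct].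
by case/orP: ev => /eqP ev; rewrite -ev ?cs ?ct in cev.
Qed.

Lemma W_state_crossing (X : {set V}) u v :
  u \in X -> v \notin X -> exists e, crossing s t X e.
Proof.
case: W => _ _ mc one red uX vX; apply/existsP; apply: contraT.
rewrite negb_exists => /forallP uncrossed.
have [eu [eu_u ceu]] := red u; have [ev [ev_v cev]] := red v.
have [M [pM euM]] := mc eu; have [N [pN evN]] := mc ev.
pose K := [set e in M | s e \in X] :|: [set e in N | s e \notin X].
have pK : perfect_matching s t K := perfect_matching_splice pM pN uncrossed.
have seuX : s eu \in X by rewrite (incident_uncrossed (uncrossed eu) eu_u).
have sevX : s ev \notin X by rewrite (incident_uncrossed (uncrossed ev) ev_v).
have euev : eu != ev by apply: contraNneq sevX => <-.
have two_bichromatic : [set eu; ev] \subset [set e in K | bichromatic s t c e].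
  apply/subsetP => e; rewrite !inE => /orP [] /eqP ->.
  - by rewrite (W_state_red_bichromatic eu_u ceu) euM seuX.
  - by rewrite (W_state_red_bichromatic ev_v cev) evN sevX orbT.
by have := subset_leq_card two_bichromatic; rewrite cards2 euev one.
Qed.

Lemma W_state_card_ge2 : 2 <= #|V|.
Proof.
case: W => noloop _ _ one red.
case: (pickP (@predT V)) => [v _ | noV].
  have [e _] := red v.
  rewrite -cardsT; apply: leq_trans (subset_leq_card (subsetT [set s e; t e])).
  by rewrite cards2 noloop.
have p0 : perfect_matching s t set0 by apply/forallP => x; have := noV x.
have := one _ p0.
suff -> : [set e in set0 | bichromatic s t c e] = set0 by rewrite cards0.
by apply/setP => e; rewrite !inE.
Qed.

Lemma W_state_connected : connected_on s t [set: V].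
Proof.
apply: connected_on_crossing => A a b _ aA; rewrite setTD inE => bA.
have [e ecross] := W_state_crossing aA bA.
by exists e; rewrite ecross !inE.
Qed.

Lemma W_state_connected_setD1 x : connected_on s t [set~ x].
Proof.
have [noloop _ mc _ _] := W.
apply: connected_on_crossing => A a b AS aA; rewrite !inE => /andP [bA bx].
have xA : x \notin A by apply/negP => /(subsetP AS); rewrite !inE eqxx.
apply/existsP; apply: contraT; rewrite negb_exists => /forallP avoid.
have crossAx e : crossing s t A e -> incident s t e x.
  move=> eA; apply: contraT; rewrite /incident negb_or => ex.
  by move: (avoid e); rewrite eA !inE eq_sym (eq_sym x) ex.
have [uncrossed | uncrossed] := matching_covered_vertex_cut noloop mc xA crossAx.
- have [e] := W_state_crossing aA bA; by rewrite (negbTE (uncrossed e)).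
- have aA1 : a \in x |: A by rewrite in_setU1 aA orbT.
  have bA1 : b \notin x |: A by rewrite in_setU1 negb_or bx.
  have [e] := W_state_crossing aA1 bA1; by rewrite (negbTE (uncrossed e)).
Qed.

End WState.

Theorem mainTheorem6 (V E : finType) (s t : E -> V) (c : E -> V -> bool) :
  W_state_graph s t c -> two_connected s t.
Proof.
move=> W; split.
- exact: W_state_card_ge2 W.
- exact: W_state_connected W.
- exact: W_state_connected_setD1 W.
Qed.
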